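(* Let $X$ be a weak complicial set, $x\in X_0$ a vertex and $n\ge1$. Define a multiplication on $\tau_n(X,x)$ by $[\alpha][\beta]=[d_n\theta]$, where $\theta:\Delta^n[n+1]\to X$ is any stratified map with $d_{n-1}\theta=\alpha$, $d_{n+1}\theta=\beta$ and $d_i\theta$ constant at $x$ for $i\notin\{n-1,n,n+1\}$ (such $\theta$ exists by lifting along $\Lambda^n[n+1]\hookrightarrow\Delta^n[n+1]$, and the class $[d_n\theta]$ depends only on $[\alpha],[\beta]$). Then this multiplication makes $\tau_n(X,x)$ a monoid, whose unit is the class of the constant $n$-simplex at $x$.
   Context: A stratified simplicial set is a pair $(X,tX)$ where $X$ is a simplicial set and $tX$ is a set of simplices of $X$ (thin simplices) containing all degenerate simplices and no $0$-simplices; stratified maps are simplicial maps preserving thin simplices. A regular stratified subset $(X,tX)\subset(Y,tY)$ means $X\subset Y$, $tX=X\cap tY$. For $n\ge1$, $\Delta[n]_t$ is $\Delta[n]$ with thin simplices the degenerate ones and $\mathrm{Id}_{[n]}$. For $k\in[n]$, $\Delta^k[n]$ is $\Delta[n]$ with thin simplices the degenerate ones and all $\alpha:[m]\to[n]$ with $\{k-1,k,k+1\}\cap[n]\subset\mathrm{Im}(\alpha)$; $\Lambda^k[n]$ is the regular stratified subset of $\Delta^k[n]$ generated by the faces $\delta_i$, $i\neq k$; $\Delta^k[n]''$ (resp. $\Lambda^k[n]'$) is $\Delta^k[n]$ (resp. $\Lambda^k[n]$) with additionally all its $(n-1)$-simplices thin; $\Delta^k[n]'=\Delta^k[n]\cup\Lambda^k[n]'$.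 A weak complicial set is a stratified simplicial set with the right lifting property against $\Lambda^k[n]\hookrightarrow\Delta^k[n]$ ($n\ge1$, $k\in[n]$) and $\Delta^k[n]'\hookrightarrow\Delta^k[n]''$ ($n\ge2$, $k\in[n]$). The product $X\circledast Y$ has underlying simplicial set $X\times Y$, with $(x,y)$ thin iff $x$ and $y$ are thin. For stratified maps $f,g:A\to X$ and an inclusion $B\hookrightarrow A$ with $f|_B=g|_B$, $f\sim_B g$ means there is a stratified map $H:A\circledast\Delta[1]_t\to X$ with $H|_{A\times\{0\}}=f$, $H|_{A\times\{1\}}=g$ and $H|_{B\circledast\Delta[1]_t}=f|_B\circ\mathrm{proj}_B$. Here $n$-simplices of $X$ are regarded as stratified maps $\Delta[n]\to X$ where $\Delta[n]$ carries the stratification with only degenerate simplices thin. For $n\ge1$, $\tau_n(X,x)$ (the $n$-th homotopy monoid) is the set of equivalence classes under $\sim_{\partial\Delta[n]}$ of $n$-simplices $\alpha$ of $X$ whose restriction to $\partial\Delta[n]$ is constant at $x$. *)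

From Stdlib Require Import Relations.
From mathcomp Require Import all_boot.
Set Implicit Arguments. Unset Strict Implicit. Unset Printing Implicit Defensive.

Definition monob m n (f : {ffun 'I_m.+1 -> 'I_n.+1}) : bool :=
  [forall i : 'I_m.+1, forall j : 'I_m.+1, (i <= j) ==> (f i <= f j)].
Definition mono m n := {f : {ffun 'I_m.+1 -> 'I_n.+1} | monob f}.
Definition mfun m n (f : mono m n) : 'I_m.+1 -> 'I_n.+1 := fun i => sval f i.

Lemma mono_le m n (f : mono m n) (i j : 'I_m.+1) : i <= j -> mfun f i <= mfun f j.
Proof.
case: f => g /= Hg Hij.
have /forallP H := Hg; have /forallP H2 := H i.
by have /implyP := H2 j; apply.
Qed.

Definition mk_mono m n (f : 'I_m.+1 -> 'I_n.+1)
  (H : forall i j : 'I_m.+1, i <= j -> f i <= f j) : mono m n.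
Proof.
exists (finfun f); apply/forallP => i; apply/forallP => j; apply/implyP => Hij.
by rewrite !ffunE; apply: H.
Defined.

Definition mid n : mono n n := @mk_mono n n (fun i => i) (fun i j h => h).
Definition mcomp l m n (f : mono m n) (g : mono l m) : mono l n :=
  @mk_mono l n (fun i => mfun f (mfun g i)) (fun i j h => mono_le f (mono_le g h)).
Definition mconst m n (k : 'I_n.+1) : mono m n :=
  @mk_mono m n (fun _ => k) (fun _ _ _ => leqnn k).
Definition delta n (i : 'I_n.+2) : mono n n.+1.
Proof.
refine (@mk_mono n n.+1 (fun j => lift i j) _) => j j' h.
by rewrite /= leq_bump2.
Defined.
Definition in_image m n (a : mono m n) (i : nat) : Prop :=
  exists j : 'I_m.+1, nat_of_ord (mfun a j) = i.

Record sset := SSet { sobj : nat -> Type;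
                      sact : forall m n, mono m n -> sobj n -> sobj m }.
Arguments sact {s m n}.
Definition is_sset (X : sset) : Prop :=
  (forall n (x : sobj X n), sact (mid n) x = x) /\
  (forall l m n (f : mono m n) (g : mono l m) (x : sobj X n),
      sact (mcomp f g) x = sact g (sact f x)).

Definition thinness (X : sset) := forall m, sobj X m -> Prop.

Definition degenerate (X : sset) m (x : sobj X m) : Prop :=
  exists p (f : mono m p) (y : sobj X p), p < m /\ x = sact f y.

Definition is_stratified (X : sset) (tX : thinness X) : Prop :=
  (forall m (x : sobj X m), degenerate x -> tX m x) /\
  (forall x : sobj X 0, ~ tX 0 x).

Definition smap (X Y : sset) := forall m, sobj X m -> sobj Y m.
Definition simplicial (X Y : sset) (h : smap X Y) : Prop :=
  forall m k (f : mono m k) (a : sobj X k), h m (sact f a) = sact f (h k a).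
Definition preserves_thin (X Y : sset) (tA : thinness X) (tY : thinness Y)
  (h : smap X Y) : Prop := forall m a, tA m a -> tY m (h m a).

(* Right lifting property of (Y,tY) against the inclusion of stratified sets
   (P, tS) -> (A, tT), where P is a simplicial subset of A (given by a predicate)
   with thinness tS (on P), and tT the thinness of A.
   A map out of P is represented by a function on A whose values off P are
   irrelevant. *)
Definition has_rlp (A : sset) (P tS tT : thinness A) (Y : sset) (tY : thinness Y)
  : Prop :=
  forall g : smap A Y,
    (forall m k (f : mono m k) (a : sobj A k), P k a -> g m (sact f a) = sact f (g k a)) ->
    (forall m a, P m a -> tS m a -> tY m (g m a)) ->
    exists h : smap A Y, simplicial h /\ preserves_thin tT tY h /\
                         (forall m a, P m a -> h m a = g m a).

Definition Delta (n : nat) : sset :=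
  @SSet (fun m => mono m n) (fun m k (f : mono m k) (a : mono k n) => mcomp a f).
Definition sprod (X Y : sset) : sset :=
  @SSet (fun m => (sobj X m * sobj Y m)%type)
        (fun m k f p => (sact f p.1, sact f p.2)).
Definition thin_prod (X Y : sset) (tX : thinness X) (tY : thinness Y)
  : thinness (sprod X Y) := fun m p => tX m p.1 /\ tY m p.2.

Definition thin_deg n : thinness (Delta n) := fun m a => @degenerate (Delta n) m a.
(* Delta[n]_t : degenerate simplices and the identity thin *)
Definition thin_t n : thinness (Delta n) := fun m a =>
  @degenerate (Delta n) m a \/ (m = n /\ forall j : 'I_m.+1, nat_of_ord (mfun a j) = j).
Definition thin_Dk n k : thinness (Delta n) := fun m a =>
  @degenerate (Delta n) m a \/
  (forall i, i <= n -> k.-1 <= i <= k.+1 -> in_image a i).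
Definition in_Lambda n k : thinness (Delta n) := fun m a =>
  exists i, i <= n /\ i <> k /\ ~ in_image a i.
Definition in_boundary n : thinness (Delta n) := fun m a =>
  exists i, i <= n /\ ~ in_image a i.
Definition thin_D' n k : thinness (Delta n) := fun m a =>
  @thin_Dk n k m a \/ (m.+1 = n /\ @in_Lambda n k m a).
Definition thin_D'' n k : thinness (Delta n) := fun m a =>
  @thin_Dk n k m a \/ m.+1 = n.

Arguments thin_deg : clear implicits.
Arguments thin_t : clear implicits.
Arguments thin_Dk : clear implicits.
Arguments in_Lambda : clear implicits.
Arguments in_boundary : clear implicits.
Arguments thin_D' : clear implicits.
Arguments thin_D'' : clear implicits.

Definition weak_complicial (X : sset) (tX : thinness X) : Prop :=
  (forall n k, 1 <= n -> k <= n ->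
     has_rlp (in_Lambda n k) (thin_Dk n k) (thin_Dk n k) tX) /\
  (forall n k, 2 <= n -> k <= n ->
     has_rlp (fun _ _ => True) (thin_D' n k) (thin_D'' n k) tX).

Definition rel_homotopic (A : sset) (tA : thinness A) (B : thinness A)
  (X : sset) (tX : thinness X) (f g : smap A X) : Prop :=
  (forall m a, B m a -> f m a = g m a) /\
  exists H : smap (sprod A (Delta 1)) X,
    simplicial H /\ preserves_thin (thin_prod tA (thin_t 1)) tX H /\
    (forall m a, H m (a, mconst m (@ord0 1)) = f m a) /\
    (forall m a, H m (a, mconst m (@ord_max 1)) = g m a) /\
    (forall m a t, B m a -> H m (a, t) = f m a).

Definition yon (X : sset) n (a : sobj X n) : smap (Delta n) X :=
  fun m (b : mono m n) => sact b a.

Definition cst (X : sset) (x : sobj X 0) m : sobj X m := sact (mconst m (@ord0 0)) x.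

Definition bdry_const (X : sset) (x : sobj X 0) n (a : sobj X n) : Prop :=
  forall m (b : mono m n), @in_boundary n m b -> sact b a = cst x m.

Definition htp (X : sset) (tX : thinness X) (x : sobj X 0) n (a b : sobj X n) : Prop :=
  bdry_const x a /\ bdry_const x b /\
  rel_homotopic (thin_deg n) (in_boundary n) tX (yon a) (yon b).

Definition cls (X : sset) (tX : thinness X) (x : sobj X 0) n (a : sobj X n)
  : sobj X n -> Prop := fun b => clos_refl_sym_trans _ (@htp X tX x n) a b.

Definition tau (X : sset) (tX : thinness X) (x : sobj X 0) n :=
  {P : sobj X n -> Prop | exists a, bdry_const x a /\ P = cls tX x a}.
Definition tcls (X : sset) (tX : thinness X) (x : sobj X 0) n (a : sobj X n)
  (Ha : bdry_const x a) : tau tX x n :=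
  exist _ (cls tX x a) (ex_intro _ a (conj Ha erefl)).

Definition face (X : sset) n (i : 'I_n.+2) (t : sobj X n.+1) : sobj X n :=
  sact (delta i) t.

Definition theta_cond (X : sset) (tX : thinness X) (x : sobj X 0) n
  (a b : sobj X n) (t : sobj X n.+1) : Prop :=
  (forall m (g : mono m n.+1), @thin_Dk n.+1 n m g -> tX m (sact g t)) /\
  face (inord n.-1) t = a /\ face (inord n.+1) t = b /\
  (forall i : 'I_n.+2, nat_of_ord i <> n.-1 -> nat_of_ord i <> n ->
      nat_of_ord i <> n.+1 -> face i t = cst x n).

(* Products are represented by "composites": a thin (n+1)-simplex whose faces
   n-1, n, n+1 are a, c, b and whose other faces are constant exhibits c as a
   representative of [a][b]; they exist by filling the horn Λ^n[n+1].
   All the algebra comes from one lemma about a 4-dimensional configuration: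
   faces j, j+2, j+3 of an (n+2)-simplex given by thin simplices form a horn
   Λ^(j+1)[n+2], and the remaining face of a filler is thin by the second
   lifting property.  It gives associativity of composites and, with
   degenerate simplices as units, shows that "c is a composite of the
   constant simplex and a" is an equivalence a ≈ c compatible with
   composition.  Finally ≈ is the homotopy relation: a thin (n+1)-simplex
   whose faces n, n+1 are c, a is a prism a ~ c, and conversely the
   triangulation of Δ[n] × Δ[1] turns a homotopy into a chain of thin
   simplices which the same lemma slides into position n. *)

From mathcomp Require Import all_boot zify.
From Stdlib Require Import Relations Classical ClassicalEpsilon ProofIrrelevance
  FunctionalExtensionality PropExtensionality.
Set Implicit Arguments. Unset Strict Implicit. Unset Printing Implicit Defensive.
Set Bullet Behavior "Strict Subproofs".

(* Only meaningful for [p <= m]: [inord] sends larger [p] to [0]. *)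
Definition mval m n (f : mono m n) (p : nat) : nat := mfun f (inord p).

Lemma mval_ord m n (f : mono m n) (i : 'I_m.+1) : mfun f i = mval f i :> nat.
Proof. by rewrite /mval inord_val. Qed.

Lemma mval_le m n (f : mono m n) p : mval f p <= n.
Proof. by rewrite -ltnS ltn_ord. Qed.

Lemma mval_homo m n (f : mono m n) p q : p <= q -> q <= m -> mval f p <= mval f q.
Proof. by move=> pq qm; apply: mono_le; rewrite !inordK //; lia. Qed.

Lemma mono_ext m n (f g : mono m n) : (forall p, p <= m -> mval f p = mval g p) -> f = g.
Proof.
move=> fg; apply/val_inj/ffunP => i; apply: val_inj.
by have := fg i; rewrite -!mval_ord; apply; rewrite -ltnS.
Qed.

Definition mono_of m n (f : nat -> nat)
    (f_homo : forall p q, p <= q -> q <= m -> f p <= f q)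
    (f_le : forall p, p <= m -> f p <= n) : mono m n.
Proof.
refine (@mk_mono m n (fun i => inord (f i)) _) => i j ij.
have := ltn_ord i; have := ltn_ord j; rewrite !ltnS => jm im.
by rewrite !inordK ?ltnS ?f_le //; apply: f_homo.
Defined.

Lemma mval_mono_of m n f f_homo f_le p :
  p <= m -> mval (@mono_of m n f f_homo f_le) p = f p.
Proof.
move=> pm; rewrite /mval /mfun /mono_of /mk_mono /= ffunE.
by rewrite (@inordK m p) // inordK // ltnS f_le.
Qed.

Lemma mval_comp l m n (f : mono m n) (g : mono l m) p :
  mval (mcomp f g) p = mval f (mval g p).
Proof. by rewrite /mval /mfun /= ffunE inord_val. Qed.

Lemma mval_id n p : p <= n -> mval (mid n) p = p.
Proof. by move=> pn; rewrite /mval /mfun /= ffunE inordK. Qed.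

Lemma mval_const m n (k : 'I_n.+1) p : mval (mconst m k) p = k.
Proof. by rewrite /mval /mfun /= ffunE. Qed.

Lemma mcomp_idl m n (f : mono m n) : mcomp (mid n) f = f.
Proof. by apply: mono_ext => p _; rewrite mval_comp mval_id // mval_le. Qed.

Lemma mcompA k l m n (f : mono m n) (g : mono l m) (h : mono k l) :
  mcomp f (mcomp g h) = mcomp (mcomp f g) h.
Proof. by apply: mono_ext => p _; rewrite !mval_comp. Qed.

Definition coface N (i : nat) : mono N N.+1 := delta (inord i).

Lemma mval_coface N i p : i <= N.+1 -> p <= N -> mval (coface N i) p = bump i p.
Proof. by move=> iN pN; rewrite /mval /mfun /= ffunE /= !inordK. Qed.

Lemma coface_cancel N i l (f g : mono l N) : i <= N.+1 ->
  mcomp (coface N i) f = mcomp (coface N i) g -> f = g.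
Proof.
move=> iN e; apply: mono_ext => p pl; have := congr1 (fun h => mval h p) e.
by rewrite !mval_comp !mval_coface ?mval_le // => /(congr1 (unbump i)); rewrite !bumpK.
Qed.

Lemma coface_coface N i j : i < j -> j <= N.+2 ->
  mcomp (coface N.+1 j) (coface N i) = mcomp (coface N.+1 i) (coface N j.-1).
Proof.
move=> ij jN; apply: mono_ext => p pN.
by rewrite !mval_comp !mval_coface //; rewrite /bump; case: leqP; lia.
Qed.

Definition misses m n (s : mono m n) (i : nat) := forall p, p <= m -> mval s p <> i.

Lemma in_imageP m n (a : mono m n) i : in_image a i <-> exists2 p, p <= m & mval a p = i.
Proof.
split=> [[j <-]|[p pm <-]]; last by exists (inord p).
by exists j; rewrite ?mval_ord // -ltnS.
Qed.

Lemma misses_in_image m n (a : mono m n) i : misses a i <-> ~ in_image a i.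
Proof.
split=> [ai /in_imageP[p pm] //|ai p pm api]; first exact: ai.
by apply: ai; apply/in_imageP; exists p.
Qed.

Lemma in_boundaryP m n (a : mono m n) :
  in_boundary n m a <-> exists2 i, i <= n & misses a i.
Proof.
by split=> [[i [ni /misses_in_image]]|[i ni /misses_in_image]]; exists i.
Qed.

Lemma coface_misses N i : i <= N.+1 -> misses (coface N i) i.
Proof. by move=> iN p pN; rewrite mval_coface // /bump; case: leqP; lia. Qed.

(* The [minn] only keeps the values in range when [s] does not miss [i]. *)
Definition unbump_mono m N (i : nat) (s : mono m N.+1) : mono m N.
Proof.
refine (@mono_of m N (fun p => minn (unbump i (mval s p)) N) _ _) => [p q pq qm|p _].
  by have := mval_homo s pq qm; rewrite /unbump; do 2 case: ltnP; lia.
lia.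
Defined.

Lemma mval_unbump_mono m N i (s : mono m N.+1) p :
  p <= m -> mval (unbump_mono i s) p = minn (unbump i (mval s p)) N.
Proof. exact: mval_mono_of. Qed.

Lemma coface_unbump_mono m N i (s : mono m N.+1) :
  i <= N.+1 -> misses s i -> s = mcomp (coface N i) (unbump_mono i s).
Proof.
move=> iN si; apply: mono_ext => p pm.
rewrite mval_comp mval_unbump_mono // mval_coface //; last lia.
by have := si p pm; have := mval_le s p; rewrite /bump /unbump; case: ltnP; case: leqP; lia.
Qed.

Lemma unbump_mono_comp l m N i (a : mono m N.+1) (f : mono l m) :
  unbump_mono i (mcomp a f) = mcomp (unbump_mono i a) f.
Proof. by apply: mono_ext => p pl; rewrite mval_comp !mval_unbump_mono ?mval_le // mval_comp. Qed.

Lemma unbump_mono_coface N i : i <= N.+1 -> unbump_mono i (coface N i) = mid N.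
Proof.
move=> iN; apply: mono_ext => p pN.
by rewrite mval_unbump_mono // mval_coface // mval_id // /unbump /bump; case: leqP; case: ltnP; lia.
Qed.

Lemma misses_unbump_mono m N (s : mono m N.+1) i i' :
  i <= N.+1 -> i' <= N.+1 -> i <> i' -> misses s i -> misses s i' ->
  misses (unbump_mono i s) (unbump i i').
Proof.
move=> iN i'N ii' si si' p pm; rewrite mval_unbump_mono //.
by have := si p pm; have := si' p pm; have := mval_le s p; rewrite /unbump; do 2 case: ltnP; lia.
Qed.

Definition codeg m (p : nat) : mono m.+1 m.
Proof.
refine (@mono_of m.+1 m (fun q => minn (unbump p q) m) _ _) => [q r qr _|q _]; last lia.
by rewrite /unbump; do 2 case: ltnP; lia.
Defined.

Lemma mval_codeg m p q : q <= m.+1 -> mval (codeg m p) q = minn (unbump p q) m.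
Proof. exact: mval_mono_of. Qed.

Lemma codeg_coface N j i : j <= N -> (i == j) || (i == j.+1) ->
  mcomp (codeg N j) (coface N i) = mid N.
Proof.
move=> jN /orP[]/eqP-> ; apply: mono_ext => p pN;
  by rewrite mval_comp mval_coface // ?mval_codeg ?mval_id // /bump /unbump;
     case: leqP; case: ltnP; lia.
Qed.

Lemma codeg_coface_boundary N j i : j <= N -> i <= N.+1 -> i <> j -> i <> j.+1 ->
  in_boundary N N (mcomp (codeg N j) (coface N i)).
Proof.
move=> jN iN ij ij1; apply/in_boundaryP; exists (if i < j then i else i.-1).
  by case: ltnP; lia.
move=> p pN; rewrite mval_comp mval_coface // mval_codeg; last by rewrite /bump; case: leqP; lia.
by rewrite /bump /unbump; case: (ltnP i j); case: (leqP i p); case: ltnP; lia.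
Qed.

Definition repeats m n (s : mono m n) := exists2 p, p < m & mval s p = mval s p.+1.

Lemma repeats_comp l m n (f : mono m n) (g : mono l m) : repeats g -> repeats (mcomp f g).
Proof. by case=> p pl e; exists p; rewrite // !mval_comp e. Qed.

Lemma repeats_or_strict m n (s : mono m n) :
  repeats s \/ forall p, p < m -> mval s p < mval s p.+1.
Proof.
case: (classic (repeats s)) => [|srep]; [by left | right] => p pm.
have := mval_homo s (leqnSn p) pm; rewrite leq_eqVlt => /orP[/eqP e|//].
by case: srep; exists p.
Qed.

Lemma strict_mval_ge m n (s : mono m n) :
  (forall p, p < m -> mval s p < mval s p.+1) ->
  forall p q, p <= q -> q <= m -> mval s p + (q - p) <= mval s q.
Proof.
move=> sinc p; elim=> [|q IH]; first by rewrite leqn0 => /eqP-> _; rewrite addn0.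
move=> pq qm; case: (ltnP p q.+1) => pq'; last by rewrite (_ : p = q.+1) ?subnn ?addn0 //; lia.
by have := IH ltac:(lia) ltac:(lia); have := sinc q qm; lia.
Qed.

Lemma repeats_of_lt m n (s : mono m n) : n < m -> repeats s.
Proof.
move=> nm; case: (repeats_or_strict s) => // /strict_mval_ge/(_ 0 m) => ge.
by have := ge (leq0n m) (leqnn m); have := mval_le s m; lia.
Qed.

Lemma degenerate_repeats N m (a : mono m N) : @degenerate (Delta N) m a -> repeats a.
Proof. by case=> p [f [y [pm ->]]]; apply/repeats_comp/repeats_of_lt. Qed.

Lemma repeats_factor m N (s : mono m.+1 N) p : p <= m -> mval s p = mval s p.+1 ->
  s = mcomp (mcomp s (coface m p.+1)) (codeg m p).
Proof.
move=> pm e; apply: mono_ext => q qm.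
rewrite !mval_comp mval_codeg // mval_coface; try lia.
rewrite /unbump /bump; case: (ltnP p q) => pq; case: leqP => ?; try (congr mval; lia).
by rewrite (_ : q = p.+1) -?e; [congr mval; lia | lia].
Qed.

Lemma endo_repeats_or_id m (s : mono m m) :
  repeats s \/ forall p, p <= m -> mval s p = p.
Proof.
case: (repeats_or_strict s) => [|/strict_mval_ge ge]; [by left | right] => p pm.
by have := ge 0 p (leq0n p) pm; have := ge p m pm (leqnn m); have := mval_le s m; lia.
Qed.

Lemma mono_trichotomy m M (s : mono m M) :
  [\/ exists2 i, i <= M & misses s i, repeats s
    | m = M /\ forall p, p <= m -> mval s p = p].
Proof.
case: (repeats_or_strict s) => [|sinc]; first by constructor 2.
have ge := strict_mval_ge sinc.
case: (posnP (mval s 0)) => s0; last first.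
  by constructor 1; exists 0 => // p pm; have := ge 0 p (leq0n p) pm; lia.
case: (classic (exists2 p, p < m & (mval s p).+1 < mval s p.+1)) => [[p pm gap]|nogap].
  constructor 1; exists (mval s p).+1; first by have := mval_le s p.+1; lia.
  move=> q qm; case: (leqP q p) => qp.
    by have := mval_homo s qp (ltnW pm); lia.
  by have := mval_homo s qp qm; lia.
have sid : forall p, p <= m -> mval s p = p.
  elim=> // p IH pm; have := IH (ltnW pm); have := sinc p pm.
  case: (leqP (mval s p.+1) (mval s p).+1) => ? //; first lia.
  by case: nogap; exists p.
case: (ltngtP m M) => mM.
- by constructor 1; exists M => // p pm; rewrite sid //; lia.
- by have := mval_le s m; rewrite sid //; lia.
- by constructor 3.
Qed.

Section WeakComplicial.
Unset Implicit Arguments.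
Variables (X : sset) (tX : thinness X) (x : sobj X 0).
Hypotheses (HX : is_sset X) (Hstr : is_stratified tX) (Hwc : weak_complicial tX).
Set Implicit Arguments.

Lemma sact_id n (y : sobj X n) : sact (mid n) y = y.
Proof. exact: HX.1. Qed.

Lemma sact_comp l m n (f : mono m n) (g : mono l m) (y : sobj X n) :
  sact (mcomp f g) y = sact g (sact f y).
Proof. exact: HX.2. Qed.

Definition nface M (i : nat) (y : sobj X M.+1) : sobj X M := sact (coface M i) y.

Lemma face_inord M i (y : sobj X M.+1) : face (inord i) y = nface i y.
Proof. by []. Qed.

Lemma nface_nface N i j (y : sobj X N.+2) : i < j -> j <= N.+2 ->
  nface i (nface j y) = nface j.-1 (nface i y).
Proof. by move=> ij jN; rewrite /nface -!sact_comp coface_coface. Qed.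

Lemma cst_act m k (f : mono m k) : sact f (cst x k) = cst x m.
Proof.
by rewrite /cst -sact_comp; congr sact; apply: mono_ext => p _; rewrite mval_comp !mval_const.
Qed.

Lemma nface_cst N i : nface i (cst x N.+1) = cst x N.
Proof. exact: cst_act. Qed.

Lemma degenerate_thin m (y : sobj X m) : degenerate y -> tX m y.
Proof. exact: Hstr.1. Qed.

Lemma repeats_thin m N (s : mono m N) (y : sobj X N) : repeats s -> tX m (sact s y).
Proof.
case: m s => [|m] s [p pm e] //; apply: degenerate_thin.
rewrite (repeats_factor (pm : p <= m) e) sact_comp.
by exists m, (codeg m p), (sact (mcomp s (coface m p.+1)) y).
Qed.

Lemma cst_thin m : 1 <= m -> tX m (cst x m).
Proof. by move=> m_gt0; apply: degenerate_thin; exists 0, (mconst m ord0), x. Qed.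

Lemma sact_misses m N (s : mono m N.+1) (y : sobj X N.+1) i :
  i <= N.+1 -> misses s i -> sact s y = sact (unbump_mono i s) (nface i y).
Proof. by move=> iN si; rewrite /nface -sact_comp -coface_unbump_mono. Qed.

Lemma bdry_const_cst n : bdry_const x (cst x n).
Proof. by move=> m b _; apply: cst_act. Qed.

Lemma bdry_const_misses m n (s : mono m n) (a : sobj X n) i :
  bdry_const x a -> i <= n -> misses s i -> sact s a = cst x m.
Proof. by move=> ca i_le si; apply: ca; apply/in_boundaryP; exists i. Qed.

Lemma bdry_const_nface N (a : sobj X N.+1) i :
  bdry_const x a -> i <= N.+1 -> nface i a = cst x N.
Proof. by move=> ca iN; apply: (bdry_const_misses ca iN); apply: coface_misses. Qed.

Lemma sact_misses2 m N (s : mono m N.+1) (y : sobj X N.+1) i i' :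
  bdry_const x (nface i y) -> i <= N.+1 -> i' <= N.+1 -> i <> i' ->
  misses s i -> misses s i' -> sact s y = cst x m.
Proof.
move=> cy iN i'N ii' si si'; rewrite (sact_misses y iN si).
apply: (bdry_const_misses cy _ (misses_unbump_mono iN i'N ii' si si')).
by rewrite /unbump; case: ltnP; lia.
Qed.

Lemma bdry_const_face M (y : sobj X M.+1) k : k <= M.+1 ->
  (forall i, i <= M.+1 -> i <> k -> bdry_const x (nface i y)) -> bdry_const x (nface k y).
Proof.
move=> kM cy m b /in_boundaryP[v vM bv]; rewrite /nface -sact_comp.
have ik : bump k v <> k by rewrite /bump; case: leqP; lia.
have iM : bump k v <= M.+1 by rewrite /bump; case: leqP; lia.
apply: (sact_misses2 (cy _ iM ik) iM kM ik).
- move=> p pm; rewrite mval_comp mval_coface ?mval_le //.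
  by have := bv p pm; have := mval_le b p; rewrite /bump; case: leqP; case: leqP; lia.
- by move=> p pm; rewrite mval_comp mval_coface ?mval_le //; rewrite /bump; case: leqP; lia.
Qed.

Definition Dk_stratified M k (y : sobj X M) : Prop :=
  forall m (g : mono m M), thin_Dk M k m g -> tX m (sact g y).

Lemma thin_Dk_gt0 M k m (g : mono m M) : 1 <= M -> k <= M -> thin_Dk M k m g -> 1 <= m.
Proof.
move=> M_gt0 kM [/degenerate_repeats[p pm _]|cov]; first lia.
case: m g cov => // g cov.
have /in_imageP[p p0 e1] := cov k.-1 ltac:(lia) ltac:(lia).
have /in_imageP[q q0 e2] := cov k.-1.+1 ltac:(lia) ltac:(lia).
by move: p0 q0 e1 e2; rewrite !leqn0 => /eqP-> /eqP->; lia.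
Qed.

Lemma Dk_stratified_thin M k (y : sobj X M) : Dk_stratified k y -> tX M y.
Proof.
move=> sy; rewrite -(sact_id y); apply: sy; right=> v vM _.
by apply/in_imageP; exists v; rewrite ?mval_id.
Qed.

Lemma cst_Dk_stratified M k : 1 <= M -> k <= M -> Dk_stratified k (cst x M).
Proof. by move=> M_gt0 kM m g gk; rewrite cst_act; apply/cst_thin/(thin_Dk_gt0 M_gt0 kM gk). Qed.

Section HornFilling.
Variables (M k : nat) (G : nat -> sobj X M.+1).
Hypothesis k_le : k <= M.+2.
Hypothesis G_compat : forall i j, i < j -> j <= M.+2 -> i <> k -> j <> k ->
  nface i (G j) = nface j.-1 (G i).
Hypothesis G_strat : forall i, i <= M.+2 -> (i < k.-1) || (k.+1 < i) ->
  Dk_stratified (if i < k then k.-1 else k) (G i).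

Lemma horn_compat m (s : mono m M.+2) i i' : i <= M.+2 -> i' <= M.+2 -> i <> k -> i' <> k ->
  misses s i -> misses s i' -> sact (unbump_mono i s) (G i) = sact (unbump_mono i' s) (G i').
Proof.
wlog ii' : i i' / i < i'.
  move=> W iM i'M ik i'k si si'.
  by case: (ltngtP i i') => [ii'|i'i|-> //]; [apply: W | symmetry; apply: W].
move=> iM i'M ik i'k si si'; have ne : i <> i' by lia.
have s'i : misses (unbump_mono i' s) i.
  have := misses_unbump_mono i'M iM (nesym ne) si' si.
  by rewrite /unbump ltnNge (ltnW ii') subn0.
have si'1 : misses (unbump_mono i s) i'.-1.
  by have := misses_unbump_mono iM i'M ne si si'; rewrite /unbump ii' subn1.
have e1 := coface_unbump_mono (ltac:(lia) : i'.-1 <= M.+1) si'1.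
have e2 := coface_unbump_mono (ltac:(lia) : i <= M.+1) s'i.
rewrite [unbump_mono i s]e1 [unbump_mono i' s]e2 !sact_comp -!/(nface _ _) (G_compat ii') //.
congr sact; apply: (coface_cancel (i := i'.-1)); [lia|]; apply: (coface_cancel (i := i)); [lia|].
rewrite -e1 -coface_unbump_mono // mcompA -coface_coface //.
by rewrite -mcompA -e2 -coface_unbump_mono.
Qed.

Definition horn_map : smap (Delta M.+2) X := fun m (s : mono m M.+2) =>
  match excluded_middle_informative (exists i, [/\ i <= M.+2, i <> k & misses s i]) with
  | left H => let i := proj1_sig (constructive_indefinite_description _ H) in
              sact (unbump_mono i s) (G i)
  | right _ => sact (unbump_mono 0 s) (G 0)
  end.

Lemma horn_mapE m (s : mono m M.+2) i : i <= M.+2 -> i <> k -> misses s i ->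
  horn_map s = sact (unbump_mono i s) (G i).
Proof.
move=> iM ik si; rewrite /horn_map; case: excluded_middle_informative => [H|[]].
  by case: (constructive_indefinite_description _ H) => j [jM jk sj] /=; apply: horn_compat.
by exists i.
Qed.

Lemma horn_face_thin i m (s : mono m M.+1) : i <= M.+2 -> i <> k ->
  thin_Dk M.+2 k m (mcomp (coface M.+1 i) s) -> tX m (sact s (G i)).
Proof.
move=> iM ik [/degenerate_repeats[p pm]|cov].
  rewrite !mval_comp !mval_coface ?mval_le // => e; apply: repeats_thin; exists p => //.
  by move: e; rewrite /bump; case: leqP; case: leqP; lia.
have hit v : v <= M.+2 -> k.-1 <= v <= k.+1 -> exists2 p, p <= m & bump i (mval s p) = v.
  move=> vM vk; have /in_imageP[p pm] := cov v vM vk.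
  by rewrite mval_comp mval_coface ?mval_le // => e; exists p.
have ik' : (i < k.-1) || (k.+1 < i).
  case: (ltnP i k.-1) => //= ki; rewrite ltnNge; apply/negP => ik1.
  have [p _] := hit i iM ltac:(lia); rewrite /bump; case: leqP; lia.
apply: G_strat => //; right=> v vM vk; apply/in_imageP.
have [p pm e] := hit (bump i v) ltac:(rewrite /bump; case: leqP; lia)
                                ltac:(move: vk; rewrite /bump; case: leqP; case: ltnP; lia).
by exists p => //; rewrite -(bumpK i (mval s p)) e bumpK.
Qed.

Lemma horn_fill : exists t : sobj X M.+2,
  Dk_stratified k t /\ forall i, i <= M.+2 -> i <> k -> nface i t = G i.
Proof.
have [||h [h_nat [h_thin h_ext]]] := Hwc.1 M.+2 k (ltn0Sn _) k_le horn_map.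
- move=> m l f a [i [iM [ik /misses_in_image ai]]].
  have afi : misses (mcomp a f) i by move=> p pm; rewrite mval_comp; apply: ai; rewrite mval_le.
  by rewrite /= (horn_mapE iM ik afi) (horn_mapE iM ik ai) -sact_comp unbump_mono_comp.
- move=> m a [i [iM [ik /misses_in_image ai]]] a_thin.
  by rewrite (horn_mapE iM ik ai); apply: horn_face_thin; rewrite // -coface_unbump_mono.
- have hE m g : h m g = sact g (h _ (mid M.+2)) by rewrite -h_nat /= mcomp_idl.
  exists (h _ (mid M.+2)); split=> [m g gk|i iM ik]; first by rewrite -hE; apply: h_thin.
  rewrite /nface -hE h_ext; last by exists i; do !split => //; apply/misses_in_image/coface_misses.
  by rewrite (horn_mapE iM ik (coface_misses iM)) unbump_mono_coface // sact_id.
Qed.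

End HornFilling.

Lemma thin_face_fill M k (t : sobj X M.+2) : k <= M.+2 -> Dk_stratified k t ->
  (forall i, i <= M.+2 -> i <> k -> tX _ (nface i t)) -> tX _ (nface k t).
Proof.
move=> kM st faces_thin.
have [||h [_ [h_thin h_ext]]] := Hwc.2 M.+2 k (isT : 2 <= M.+2) kM (yon t).
- by move=> m l f a _; apply: sact_comp.
- move=> m a _ [|[mM [i [iM [ik /misses_in_image ai]]]]]; first exact: st.
  have {}mM : m = M.+1 by lia.
  subst m.
  rewrite /yon (sact_misses t iM ai).
  case: (endo_repeats_or_id (unbump_mono i a)) => [|aid]; first exact: repeats_thin.
  rewrite (_ : unbump_mono i a = mid M.+1) ?sact_id; first exact: faces_thin.
  by apply: mono_ext => p pM; rewrite aid // mval_id.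
- by have := h_thin _ (coface M.+1 k) (or_intror erefl); rewrite h_ext.
Qed.

Definition faces3 N j (p q r : sobj X N) : nat -> sobj X N := fun i =>
  if i == j then p else if i == j.+1 then q else if i == j.+2 then r else cst x N.

Lemma faces3_fst N j (p q r : sobj X N) : faces3 j p q r j = p.
Proof. by rewrite /faces3 eqxx. Qed.

Lemma faces3_snd N j (p q r : sobj X N) : faces3 j p q r j.+1 = q.
Proof. by rewrite /faces3; do ![case: eqP => ?]; try lia. Qed.

Lemma faces3_thd N j (p q r : sobj X N) : faces3 j p q r j.+2 = r.
Proof. by rewrite /faces3; do ![case: eqP => ?]; try lia. Qed.

Ltac faces3_cases := rewrite /faces3; do ![case: eqP => ?]; try lia.

Definition thin_faces M (F : nat -> sobj X M) (y : sobj X M.+1) : Prop :=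
  tX M.+1 y /\ forall i, i <= M.+1 -> nface i y = F i.

Lemma thin_faces_ext M (F F' : nat -> sobj X M) y :
  (forall i, i <= M.+1 -> F i = F' i) -> thin_faces F y -> thin_faces F' y.
Proof. by move=> FF' [ty fy]; split=> // i iM; rewrite -FF' // fy. Qed.

Lemma thin_faces_shift N j (p q : sobj X N) y :
  thin_faces (faces3 j.+1 p q (cst x N)) y <-> thin_faces (faces3 j (cst x N) p q) y.
Proof. by split; apply: thin_faces_ext => i _; faces3_cases. Qed.

Lemma codeg_thin_faces N j (y : sobj X N) : j <= N -> bdry_const x y ->
  thin_faces (faces3 j y y (cst x N)) (sact (codeg N j) y).
Proof.
move=> jN cy; split; first by apply: degenerate_thin; exists N, (codeg N j), y.
move=> i iN; rewrite /nface -sact_comp.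
case: (boolP ((i == j) || (i == j.+1))) => [ij|/norP[/eqP ij /eqP ij1]].
  by rewrite codeg_coface // sact_id; faces3_cases.
by rewrite (cy _ _ (codeg_coface_boundary jN iN ij ij1)); faces3_cases.
Qed.

Lemma faces3_stratified M j (p q r : sobj X M) y : j <= M ->
  thin_faces (faces3 j p q r) y -> Dk_stratified j.+1 y.
Proof.
move=> jM [ty fy] m g gk; have m_gt0 := thin_Dk_gt0 (ltn0Sn M) (jM : j.+1 <= M.+1) gk.
case: gk => [/degenerate_repeats/repeats_thin //|cov].
case: (mono_trichotomy g) => [[i iM gi]|/repeats_thin //|[mM gid]].
- have ij : ~ j <= i <= j.+2 by move=> ij; exact: (misses_in_image g i).1 gi (cov i iM ij).
  by rewrite (sact_misses y iM gi) fy //; faces3_cases; rewrite cst_act; apply: cst_thin.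
- subst m; rewrite (_ : g = mid M.+1) ?sact_id //.
  by apply: mono_ext => p' p'M; rewrite gid // mval_id.
Qed.

Section Tetrahedron.
(* Among the vertices [j .. j+3] of an (N+2)-simplex, [y_i] omits [j+i] and
   [e_ab] keeps only [j+a] and [j+b]. *)
Variables (N j : nat) (e01 e02 e03 e12 e13 e23 : sobj X N) (y0 y2 y3 : sobj X N.+1).
Hypothesis j_lt : j < N.
Hypotheses (y0_faces : thin_faces (faces3 j e23 e13 e12) y0)
           (y2_faces : thin_faces (faces3 j e13 e03 e01) y2)
           (y3_faces : thin_faces (faces3 j e12 e02 e01) y3).

Definition tetra_horn (i : nat) : sobj X N.+1 :=
  if i == j then y0 else if i == j.+2 then y2 else if i == j.+3 then y3 else cst x N.+1.

Lemma tetra_horn_face i i' : i <= N.+1 -> i' <= N.+2 -> i' <> j.+1 ->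
  nface i (tetra_horn i') =
  if i' == j then faces3 j e23 e13 e12 i else if i' == j.+2 then faces3 j e13 e03 e01 i
  else if i' == j.+3 then faces3 j e12 e02 e01 i else cst x N.
Proof.
move=> iN i'N i'j; rewrite /tetra_horn.
by do ![case: eqP => ?]; rewrite ?nface_cst ?(proj2 y0_faces) ?(proj2 y2_faces) ?(proj2 y3_faces).
Qed.

Lemma tetrahedron : exists y1, thin_faces (faces3 j e23 e03 e02) y1.
Proof.
have [||w [w_strat w_faces]] := @horn_fill N j.+1 tetra_horn (ltac:(lia) : j.+1 <= N.+2).
- move=> i i' ii' i'N ij i'j.
  by rewrite !tetra_horn_face //; try lia; faces3_cases.
- move=> i iN ij; rewrite /tetra_horn.
  do ![case: eqP => ?]; try lia; last by case: ifP => _; apply: cst_Dk_stratified; lia.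
  by rewrite ifN; [apply: faces3_stratified y3_faces; lia | lia].
- exists (nface j.+1 w); split.
    apply: thin_face_fill w_strat _ => [|i iN ij]; first lia.
    rewrite w_faces // /tetra_horn.
    by do ![case: eqP => ?]; [case: y0_faces | case: y2_faces | case: y3_faces | apply: cst_thin].
  move=> i iN; case: (ltnP i j.+1) => ij.
    by rewrite nface_nface ?w_faces ?tetra_horn_face //; try lia; faces3_cases.
  by rewrite -[nface i _](nface_nface (i := j.+1) (j := i.+1)) ?w_faces ?tetra_horn_face //;
    try lia; faces3_cases.
Qed.

End Tetrahedron.

Section Homotopy.
Variable n : nat.

(* The j-th simplex of the standard triangulation of Δ[n] × Δ[1], in a
   homotopy from [u] to [v]. *)
Definition joined j (u v : sobj X n) : Prop :=
  exists t, thin_faces (faces3 j v u (cst x n)) t.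

Lemma joined_succ j u v : j < n -> bdry_const x v -> joined j u v -> joined j.+1 u v.
Proof.
move=> jn cv [t tf].
have t0 : thin_faces (faces3 j (cst x n) v v) (sact (codeg n j.+1) v).
  by apply/thin_faces_shift/codeg_thin_faces.
have [y1 y1f] := tetrahedron jn t0 (codeg_thin_faces (ltnW jn) cv) tf.
by exists y1; apply/thin_faces_shift.
Qed.

Lemma joined_last j u v : j <= n -> bdry_const x v -> joined j u v -> joined n u v.
Proof.
move=> + cv; move: {2}(n - j) (erefl (n - j)) => d.
elim: d j => [|d IH] j nj jn uv; first by move: uv; rewrite (_ : j = n) //; lia.
by apply: (IH j.+1); [lia | lia | apply: joined_succ => //; lia].
Qed.

Definition prism_map m (u : mono m n) (t : mono m 1) : mono m n.+1.
Proof.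
refine (@mono_of m n.+1 (fun q => mval u q + ((mval u q == n) && (mval t q == 1))) _ _).
- move=> p q pq qm; have := mval_homo u pq qm; have := mval_homo t pq qm.
  have := mval_le u q; have := mval_le t q; have := mval_le t p.
  by case: (mval u p =P n); case: (mval u q =P n); case: (mval t p =P 1);
     case: (mval t q =P 1) => /=; lia.
- by move=> p _; have := mval_le u p; case: (_ && _); lia.
Defined.

Lemma mval_prism_map m u t q : q <= m ->
  mval (@prism_map m u t) q = mval u q + ((mval u q == n) && (mval t q == 1)).
Proof. exact: mval_mono_of. Qed.

Lemma prism_map_comp l m (u : mono m n) (t : mono m 1) (f : mono l m) :
  mcomp (prism_map u t) f = prism_map (mcomp u f) (mcomp t f).
Proof.
by apply: mono_ext => q ql; rewrite mval_comp !mval_prism_map ?mval_le // !mval_comp.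
Qed.

Lemma prism_map_const0 m (a : mono m n) :
  prism_map a (mconst m ord0) = mcomp (coface n n.+1) a.
Proof.
apply: mono_ext => q qm; rewrite mval_prism_map // mval_comp mval_coface ?mval_le //.
by rewrite mval_const andbF addn0 /bump ltnNge mval_le.
Qed.

Lemma prism_map_const1 m (a : mono m n) :
  prism_map a (mconst m ord_max) = mcomp (coface n n) a.
Proof.
apply: mono_ext => q qm; rewrite mval_prism_map // mval_comp mval_coface ?mval_le //.
by rewrite mval_const andbT /bump; have := mval_le a q; case: eqP => /=; lia.
Qed.

Section Prism.
Variables (c c' : sobj X n) (tau : sobj X n.+1).
Hypotheses (cc' : bdry_const x c') (tau_faces : thin_faces (faces3 n c' c (cst x n)) tau).

Lemma prism_thin m (u : mono m n) t : repeats u -> tX m (sact (prism_map u t) tau).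
Proof.
case=> q qm uq; case: (repeats_or_strict (prism_map u t)) => [/repeats_thin //|pinc].
have [hit_n hit_n1] : mval (prism_map u t) q = n /\ mval (prism_map u t) q.+1 = n.+1.
  move: (pinc q qm); rewrite !mval_prism_map // ?(ltnW qm) // uq.
  have := mval_le u q.+1; case: (mval u q.+1 =P n) => [->|] /= ; last lia.
  by case: eqP; case: eqP => /=; lia.
have [[i iN pi]|/repeats_thin //|[mn pid]] := mono_trichotomy (prism_map u t).
- have i_lt : i < n by have := pi q (ltnW qm); have := pi q.+1 qm; rewrite hit_n hit_n1; lia.
  rewrite (sact_misses tau iN pi) (proj2 tau_faces) // /faces3.
  by do 3 (case: eqP => ?; first lia); rewrite cst_act; apply: cst_thin; lia.
- subst m; rewrite (_ : prism_map u t = mid n.+1) ?sact_id; first by case: tau_faces.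
  by apply: mono_ext => p pn; rewrite pid // mval_id.
Qed.

Lemma prism_boundary m (a : mono m n) t :
  in_boundary n m a -> sact (prism_map a t) tau = cst x m.
Proof.
case/in_boundaryP=> v vn av.
have pa q : q <= m -> mval (prism_map a t) q = mval a q + ((mval a q == n) && (mval t q == 1)).
  exact: mval_prism_map.
case: (ltnP v n) => [vn'|nv].
- have pv : misses (prism_map a t) v.
    by move=> q qm; rewrite pa //; have := av q qm; have := mval_le a q; case: eqP => /=; lia.
  have vn1 : v <= n.+1 by lia.
  rewrite (sact_misses tau vn1 pv) (proj2 tau_faces) // /faces3.
  by do 3 (case: eqP => ?; first lia); rewrite cst_act.
- have ev : v = n by lia.
  subst v; apply: (@sact_misses2 _ _ _ _ n n.+1); try lia.
  + by rewrite (proj2 tau_faces) // /faces3 eqxx.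
  + by move=> q qm; rewrite pa //; have := av q qm; case: eqP => /=; lia.
  + by move=> q qm; rewrite pa //; have := av q qm; have := mval_le a q; case: eqP => /=; lia.
Qed.

End Prism.

Lemma joined_htp c c' : bdry_const x c -> bdry_const x c' -> joined n c c' -> htp tX x c c'.
Proof.
move=> cc cc' [tau tf]; do 2 split=> //; split.
  by move=> m a ab; rewrite /yon cc // cc'.
exists (fun m p => sact (prism_map p.1 p.2) tau); split; [|split; [|split; [|split]]].
- by move=> m k f [u t] /=; rewrite -sact_comp prism_map_comp.
- by move=> m [u t] [/degenerate_repeats ur _]; exact: (prism_thin tf).
- move=> m a /=; rewrite prism_map_const0 sact_comp -/(nface _ _) (proj2 tf) //.
  by rewrite /faces3 (_ : (n.+1 == n) = false) ?eqxx //; lia.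
- by move=> m a /=; rewrite prism_map_const1 sact_comp -/(nface _ _) (proj2 tf) // /faces3 eqxx.
- by move=> m a t ab /=; rewrite /yon (cc _ _ ab) (prism_boundary cc' tf).
Qed.

Definition jump m (j : nat) : mono m 1.
Proof.
refine (@mono_of m 1 (fun v => j <= v) _ _) => [p q pq _|p _]; last by case: (j <= p).
by case: (leqP j p); case: (leqP j q) => /=; lia.
Defined.

Lemma mval_jump m j p : p <= m -> mval (jump m j) p = (j <= p).
Proof. exact: mval_mono_of. Qed.

Lemma jump_coface j i : j <= n -> (i == j) || (i == j.+1) ->
  mcomp (jump n.+1 j.+1) (coface n i) = jump n i.
Proof.
move=> jn /orP[]/eqP-> ; apply: mono_ext => p pn;
  by rewrite mval_comp mval_coface ?mval_jump ?mval_le //; try lia; rewrite /bump; case: leqP; lia.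
Qed.

Lemma htp_chain a a' : 0 < n -> htp tX x a a' -> exists c : nat -> sobj X n,
  [/\ c n.+1 = a, c 0 = a', forall j, j <= n.+1 -> bdry_const x (c j)
    & forall j, j <= n -> joined j (c j.+1) (c j)].
Proof.
move=> n_gt0 [ca [ca' [_ [H [H_nat [H_thin [H0 [H1 H_bd]]]]]]]].
exists (fun j => H n (mid n, jump n j)); split.
- rewrite (_ : jump n n.+1 = mconst n ord0) ?H0 /yon ?sact_id //.
  by apply: mono_ext => p pn; rewrite mval_jump // mval_const ltnNge pn.
- rewrite (_ : jump n 0 = mconst n ord_max) ?H1 /yon ?sact_id //.
  by apply: mono_ext => p pn; rewrite mval_jump // mval_const.
- by move=> j _ m b bb; rewrite -H_nat /= mcomp_idl H_bd //; apply: ca.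
- move=> j jn; exists (H n.+1 (codeg n j, jump n.+1 j.+1)); split.
    apply: H_thin; split=> /=; first by exists n, (codeg n j), (mid n); rewrite /= mcomp_idl.
    by left; exists 1, (jump n.+1 j.+1), (mid 1); rewrite /= mcomp_idl; split.
  move=> i iN; rewrite /nface -H_nat /= /faces3.
  case: (boolP ((i == j) || (i == j.+1))) => [ij|/norP[/eqP ij /eqP ij1]].
    by rewrite codeg_coface // jump_coface //; case/orP: ij => /eqP->; rewrite ?eqxx //;
       rewrite (_ : (j.+1 == j) = false) //; lia.
  have bd := codeg_coface_boundary jn iN ij ij1.
  by rewrite H_bd // /yon (ca _ _ bd); do 3 (case: eqP => ?; try lia).
Qed.

End Homotopy.

Lemma tau_ext n (P Q : tau tX x n) : sval P = sval Q -> P = Q.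
Proof. by case: P Q => [p p_cls] [q q_cls] /= pq; subst q; congr exist; apply: proof_irrelevance. Qed.

Definition tau_rep n (P : tau tX x n) : sobj X n :=
  proj1_sig (constructive_indefinite_description _ (proj2_sig P)).

Lemma tau_repP n (P : tau tX x n) : bdry_const x (tau_rep P) /\ sval P = cls tX x (tau_rep P).
Proof. by rewrite /tau_rep; case: constructive_indefinite_description. Qed.

Lemma tcls_rep n (P : tau tX x n) : P = tcls tX (tau_repP P).1.
Proof. exact/tau_ext/(tau_repP P).2. Qed.

Section Composite.
Variable N : nat.

(* [c] represents [a][b]: the paper's θ, with d_(n-1) θ = a, d_n θ = c and
   d_(n+1) θ = b for n = N+1 (see [composite_theta_cond]). *)
Definition composite (a b c : sobj X N.+1) : Prop :=
  exists t, thin_faces (faces3 N a c b) t.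

Lemma composite_bdry a b c :
  bdry_const x a -> bdry_const x b -> composite a b c -> bdry_const x c.
Proof.
move=> ca cb [t [_ tf]]; rewrite -(faces3_snd N a c b) -tf //.
by apply: bdry_const_face => // i iN iN1; rewrite tf //; faces3_cases; try apply: bdry_const_cst.
Qed.

Lemma composite_exists a b : bdry_const x a -> bdry_const x b -> exists c, composite a b c.
Proof.
move=> ca cb; pose G := faces3 N a (cst x N.+1) b.
have G_bd i : bdry_const x (G i) by rewrite /G; faces3_cases; try apply: bdry_const_cst.
have [||t [t_strat t_faces]] := @horn_fill N N.+1 G (leqnSn _).
- move=> i j ij jN _ _.
  by rewrite (bdry_const_nface (G_bd j)) ?(bdry_const_nface (G_bd i)) //; lia.
- move=> i iN /orP[iN'|]; last lia.
  by rewrite /G; faces3_cases; case: ifP => _; apply: cst_Dk_stratified; lia.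
- exists (nface N.+1 t), t; split; first exact: Dk_stratified_thin t_strat.
  move=> i iN; case: (eqVneq i N.+1) => [->|/eqP iN1]; first by rewrite faces3_snd.
  by rewrite t_faces // /G; faces3_cases.
Qed.

Lemma composite_theta_cond (a b c : sobj X N.+1) (t : sobj X N.+2) :
  thin_faces (faces3 N a c b) t -> theta_cond tX x a b t.
Proof.
move=> tf; split; first exact: faces3_stratified tf.
have tfE i : i <= N.+2 -> face (inord i) t = faces3 N a c b i by apply: (proj2 tf).
split; [|split]; first by rewrite /= tfE ?faces3_fst //; lia.
  by rewrite tfE ?faces3_thd.
move=> i iN iN1 iN2; rewrite -(inord_val i) tfE; first by faces3_cases.
by rewrite -ltnS.
Qed.

Lemma theta_cond_composite (a b : sobj X N.+1) (t : sobj X N.+2) :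
  theta_cond tX x a b t -> composite a b (face (inord N.+1) t).
Proof.
case=> t_strat [ta [tb tc]]; exists t; split; first exact: Dk_stratified_thin t_strat.
move=> i iN; case: (eqVneq i N) => [->|iN0]; first by rewrite faces3_fst.
case: (eqVneq i N.+1) => [->|iN1]; first by rewrite faces3_snd.
case: (eqVneq i N.+2) => [->|iN2]; first by rewrite faces3_thd.
have := tc (inord i); rewrite face_inord inordK; last lia.
by move=> -> //; try lia; faces3_cases.
Qed.

Lemma composite_assoc a b c ab bc abc :
  composite a b ab -> composite b c bc -> composite ab c abc -> composite a bc abc.
Proof. by move=> [t0 t0f] [t3 t3f] [t2 t2f]; apply: (tetrahedron (ltnSn N) t0f t2f t3f). Qed.

Lemma composite_unitl b : bdry_const x b -> composite (cst x N.+1) b b.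
Proof. by move=> cb; exists (sact (codeg N.+1 N.+1) b); apply/thin_faces_shift/codeg_thin_faces. Qed.

Lemma composite_unitr a : bdry_const x a -> composite a (cst x N.+1) a.
Proof. by move=> ca; exists (sact (codeg N.+1 N) a); apply: codeg_thin_faces. Qed.

Definition hequiv (u v : sobj X N.+1) : Prop :=
  bdry_const x u /\ composite (cst x N.+1) u v.

Lemma hequiv_bdry u v : hequiv u v -> bdry_const x v.
Proof. by case=> cu uv; apply: composite_bdry (@bdry_const_cst _) cu uv. Qed.

Lemma hequiv_refl u : bdry_const x u -> hequiv u u.
Proof. by move=> cu; split=> //; apply: composite_unitl. Qed.

Lemma composite_cst_cancel u v w : composite (cst x N.+1) u v -> composite (cst x N.+1) u w ->
  composite (cst x N.+1) v w.
Proof. exact/composite_assoc/composite_unitl/(@bdry_const_cst _). Qed.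

Lemma hequiv_sym u v : hequiv u v -> hequiv v u.
Proof.
move=> uv; split; first exact: hequiv_bdry uv.
by case: uv => cu uv; apply: composite_cst_cancel uv (composite_unitl cu).
Qed.

Lemma hequiv_trans u v w : hequiv u v -> hequiv v w -> hequiv u w.
Proof.
move=> [cu uv] [_ vw]; split=> //.
exact: composite_cst_cancel (composite_cst_cancel uv (composite_unitl cu)) vw.
Qed.

Lemma composite_congr a a' b b' c c' : hequiv a a' -> hequiv b b' ->
  composite a b c -> composite a' b' c' -> hequiv c c'.
Proof.
move=> [ca aa'] [cb bb'] abc abc'; split; first exact: composite_bdry abc.
have ab'c := composite_assoc (composite_unitr ca) bb' abc.
exact: composite_assoc aa' ab'c abc'.
Qed.

Lemma hequiv_htp u v : hequiv u v -> htp tX x u v.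
Proof.
move=> uv; apply: joined_htp; [by case: uv | exact: hequiv_bdry uv |].
by case: uv => _ [t tf]; exists t; apply/thin_faces_shift.
Qed.

Lemma htp_hequiv u v : htp tX x u v -> hequiv u v.
Proof.
case/(htp_chain (ltn0Sn N)) => c [<- <- cc cj].
have step j : j <= N.+1 -> hequiv (c j.+1) (c j).
  move=> jN; split; first exact: cc.
  by have [t tf] := joined_last jN (cc j (leqW jN)) (cj j jN); exists t; apply/thin_faces_shift.
suff: forall j, j <= N.+1 -> hequiv (c j.+1) (c 0) by apply.
elim=> [|j IH] jN; first exact: step.
exact: hequiv_trans (step _ jN) (IH (ltnW jN)).
Qed.

Lemma rst_htp_hequiv a b :
  clos_refl_sym_trans _ (@htp X tX x N.+1) a b -> bdry_const x a -> hequiv a b.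
Proof.
move=> ab ca; suff [<-|//] : a = b \/ hequiv a b by apply: hequiv_refl.
elim: ab {ca} => [u v uv|u|u v _ IH|u v w _ IH1 _ IH2].
- by right; apply: htp_hequiv.
- by left.
- by case: IH => [->|/hequiv_sym]; [left | right].
- case: IH1 => [->|uv] //; case: IH2 => [<-|vw]; right=> //.
  exact: hequiv_trans uv vw.
Qed.

Lemma cls_hequiv u v : hequiv u v -> cls tX x u = cls tX x v.
Proof.
move=> /hequiv_htp huv.
have uv : clos_refl_sym_trans _ (@htp X tX x N.+1) u v by apply: rst_step.
apply: functional_extensionality => w.
apply: propositional_extensionality; split; first exact: rst_trans (rst_sym _ _ _ _ uv).
exact: rst_trans uv.
Qed.

Definition tau_mul_rep (P Q : tau tX x N.+1) : sobj X N.+1 :=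
  proj1_sig (constructive_indefinite_description _
    (composite_exists (tau_repP P).1 (tau_repP Q).1)).

Lemma tau_mul_repP P Q : composite (tau_rep P) (tau_rep Q) (tau_mul_rep P Q).
Proof. exact: proj2_sig. Qed.

Definition tau_mul (P Q : tau tX x N.+1) : tau tX x N.+1 :=
  tcls tX (composite_bdry (tau_repP P).1 (tau_repP Q).1 (tau_mul_repP P Q)).

Lemma hequiv_tau_rep a (ca : bdry_const x a) : hequiv a (tau_rep (tcls tX ca)).
Proof.
apply: (rst_htp_hequiv _ ca); have [_ e] := tau_repP (tcls tX ca).
have : cls tX x (tau_rep (tcls tX ca)) (tau_rep (tcls tX ca)) by apply: rst_refl.
by rewrite -e.
Qed.

Lemma tau_mul_tcls a b c (ca : bdry_const x a) (cb : bdry_const x b) :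
  composite a b c -> sval (tau_mul (tcls tX ca) (tcls tX cb)) = cls tX x c.
Proof.
move=> abc; apply: cls_hequiv; apply: composite_congr (tau_mul_repP _ _) abc;
  exact/hequiv_sym/hequiv_tau_rep.
Qed.

Lemma tau_mulE a b c (ca : bdry_const x a) (cb : bdry_const x b) (cc : bdry_const x c) :
  composite a b c -> tau_mul (tcls tX ca) (tcls tX cb) = tcls tX cc.
Proof. by move=> abc; apply: tau_ext; apply: tau_mul_tcls abc. Qed.

Lemma tau_mulA : associative tau_mul.
Proof.
move=> P Q R; rewrite [P]tcls_rep [Q]tcls_rep [R]tcls_rep.
move: (tau_repP P).1 (tau_repP Q).1 (tau_repP R).1 => ca cb cc.
have [ab abP] := composite_exists ca cb; have cab := composite_bdry ca cb abP.
have [bc bcP] := composite_exists cb cc; have cbc := composite_bdry cb cc bcP.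
have [abc abcP] := composite_exists cab cc; have cabc := composite_bdry cab cc abcP.
rewrite (tau_mulE _ _ cbc bcP) (tau_mulE _ _ cab abP) (tau_mulE _ _ cabc abcP).
exact: tau_mulE _ _ _ (composite_assoc abP bcP abcP).
Qed.

Definition tau_one : tau tX x N.+1 := tcls tX (@bdry_const_cst N.+1).

Lemma tau_mul1l : left_id tau_one tau_mul.
Proof. by move=> P; rewrite [P]tcls_rep; apply: tau_mulE; apply/composite_unitl/(tau_repP P).1. Qed.

Lemma tau_mul1r : right_id tau_one tau_mul.
Proof. by move=> P; rewrite [P]tcls_rep; apply: tau_mulE; apply/composite_unitr/(tau_repP P).1. Qed.

End Composite.
End WeakComplicial.

Theorem mainTheorem4 (X : sset) (tX : thinness X)
  (HX : is_sset X) (Hstr : is_stratified tX) (Hwc : weak_complicial tX)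
  (x : sobj X 0) (n : nat) (Hn : 1 <= n) :
  (forall a b : sobj X n, bdry_const x a -> bdry_const x b ->
     exists t : sobj X n.+1, theta_cond tX x a b t) /\
  exists mul : tau tX x n -> tau tX x n -> tau tX x n,
    (forall (a b : sobj X n) (Ha : bdry_const x a) (Hb : bdry_const x b)
            (t : sobj X n.+1),
       theta_cond tX x a b t ->
       sval (mul (tcls tX Ha) (tcls tX Hb)) = cls tX x (face (inord n) t)) /\
    associative mul /\
    exists e : tau tX x n,
      sval e = cls tX x (cst x n) /\ left_id e mul /\ right_id e mul.
Proof.
case: n Hn => [//|N] _; split.
  move=> a b ca cb; have [c [t tf]] := composite_exists HX Hstr Hwc ca cb.
  by exists t; apply: composite_theta_cond tf.
exists (tau_mul HX Hstr Hwc (N := N)); split; [|split].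
- by move=> a b ca cb t /(theta_cond_composite HX); apply: tau_mul_tcls.
- exact: tau_mulA.
- exists (tau_one tX x HX N); split=> //; split; [exact: tau_mul1l | exact: tau_mul1r].
Qed.
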